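(* Let $q \ge 2$ and $n$ be integers, let $k \le \lfloor n/2\rfloor - 1$ be a nonnegative integer, and set $u = \lfloor n/2\rfloor + 1$ and $v = n-k$. If $u < v$ and $$\frac{\binom{n-k-1}{n-v}}{\binom{n-k-1}{n-u}} > \frac{(q^{2v-n}-1)\binom{n}{v}}{(q^{2u-n}-1)\binom{n}{u}},$$ then $k$-uniform states in $(\mathbb{C}^q)^{\otimes n}$ do not exist.
   Context: A pure state $|\psi\rangle \in (\mathbb{C}^q)^{\otimes n}$ is called $k$-uniform if, with $\rho = |\psi\rangle\langle\psi|$, for every subset $S \subseteq \{1,\dots,n\}$ with $|S| = k$ the reduced state of $\rho$ on the parties in $S$ equals $I/q^k$, where $I$ is the identity on $(\mathbb{C}^q)^{\otimes k}$. *)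

(* Complex numbers: complex R = R[i] for a real closed field R
   (this covers the usual complex numbers, R = the reals). *)
From HB Require Import structures.
From mathcomp Require Import all_boot all_order all_algebra.
From mathcomp Require Import complex.
Set Implicit Arguments. Unset Strict Implicit. Unset Printing Implicit Defensive.
Import Order.TTheory GRing.Theory Num.Theory.
Local Open Scope ring_scope.

(* A vector |psi> in (C^q)^{\otimes n}, given by its amplitudes in the
   computational basis |x_1 ... x_n>, x : 'I_n -> 'I_q. *)
Definition config (n q : nat) := {ffun 'I_n -> 'I_q}.
Definition qvec (R : rcfType) (n q : nat) := config n q -> R[i].

Definition glue n q (S : {set 'I_n}) (a z : config n q) : config n q :=
  [ffun i => if i \in S then a i else z i].

(* Matrix entry <a_S| Tr_{S^c} |psi><psi| |b_S> of the reduced state of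
   rho = |psi><psi| on the parties in S; only the values of a, b on S matter.
   The sum over the complement runs over configurations z restricted by
   z = a on S (so each assignment of the complement is counted once). *)
Definition reduced_entry (R : rcfType) n q (psi : qvec R n q) (S : {set 'I_n})
  (a b : config n q) : R[i] :=
  \sum_(z : config n q | [forall i in S, z i == a i])
     psi (glue S a z) * (psi (glue S b z))^*.

Definition reduced_maximally_mixed (R : rcfType) n q (psi : qvec R n q)
  (S : {set 'I_n}) : Prop :=
  forall a b : config n q,
    reduced_entry psi S a b =
      (if [forall i in S, a i == b i] then (q%:R ^+ #|S|)^-1 else 0).

Definition is_pure_state (R : rcfType) n q (psi : qvec R n q) : Prop :=
  \sum_(x : config n q) psi x * (psi x)^* = 1.

Definition k_uniform (R : rcfType) n q (k : nat) (psi : qvec R n q) : Prop :=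
  is_pure_state psi /\
  forall S : {set 'I_n}, #|S| = k -> reduced_maximally_mixed psi S.

From HB Require Import structures.
From mathcomp Require Import all_boot all_order all_algebra.
From mathcomp Require Import complex.
From mathcomp Require Import ring zify.
Set Implicit Arguments. Unset Strict Implicit. Unset Printing Implicit Defensive.
Import Order.TTheory GRing.Theory Num.Theory.
Local Open Scope ring_scope.

(* Rains' shadow argument.  Let A_S = q^|S| tr(rho_S^2) and let a_T be its
   Moebius inverse, so that A_S = sum_(T \subset S) a_T.  Each a_T is q^n times the
   squared Hilbert-Schmidt norm of sum_(W \subset T) (-1)^|W| P_(~: W) rho, where
   P_U = Tr_U(.) (x) I_U / q^|U| are commuting self-adjoint projections, hence a_T >= 0.
   For a k-uniform state A_S = 1 when |S| = k; this forces a_T = 0 for 0 < |T| <= k,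
   and since tr(rho_S^2) = tr(rho_(~: S)^2) it gives A_S = q^(n-2k) when |S| = n-k,
   while A_S >= q^(2|S|-n) holds for every S.  Summing A_S over the m-subsets yields
   C(n,m) + sum_(T != 0) a_T C(n-|T|, n-m).  Comparing m = n-k with m = u term by
   term, using that C(N,b)/C(N,a) increases with N for a <= b, gives the reverse of
   the assumed inequality. *)

Section Toggle.
Variables (I : finType) (i : I).

Definition toggle (T : {set I}) : {set I} := if i \in T then T :\ i else i |: T.

Lemma in_toggle T x : (x \in toggle T) = (x == i) (+) (x \in T).
Proof.
rewrite /toggle; case: (eqVneq x i) => [->|xi]; case: ifP => iT;
  by rewrite !inE ?eqxx ?iT ?(negbTE xi).
Qed.

Lemma toggleK : involutive toggle.
Proof. by move=> T; apply/setP => x; rewrite !in_toggle addbA addbb. Qed.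

Lemma sign_toggle (R : pzRingType) T : (-1) ^+ #|toggle T| = - (-1) ^+ #|T| :> R.
Proof.
rewrite /toggle; case: ifP => iT; last by rewrite cardsU1 iT exprS mulN1r.
by rewrite [in RHS](cardsD1 i T) iT exprS mulN1r opprK.
Qed.

Lemma toggle_subset (S T : {set I}) : i \in S -> (toggle T \subset S) = (T \subset S).
Proof.
move=> iS; apply/subsetP/subsetP => sub x; case: (eqVneq x i) => [-> //|xi];
  by have := sub x; rewrite in_toggle (negbTE xi).
Qed.

Lemma subset_toggle (W T : {set I}) : i \notin W -> (W \subset toggle T) = (W \subset T).
Proof.
move=> iW; apply/subsetP/subsetP => sub x xW; have := sub x xW;
  by rewrite in_toggle; case: eqVneq xW => [->|]; rewrite ?(negbTE iW).
Qed.

Lemma setI_toggle (W T : {set I}) : i \notin W -> W :&: toggle T = W :&: T.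
Proof.
move=> iW; apply/setP => x; rewrite !inE in_toggle.
by case: eqVneq => [->|]; rewrite ?(negbTE iW).
Qed.

Lemma sum_toggle_eq0 (V : nmodType) (P : pred {set I}) (F : {set I} -> V) :
  (forall T, P (toggle T) = P T) -> (forall T, P T -> F (toggle T) + F T = 0) ->
  \sum_(T | P T) F T = 0.
Proof.
move=> Ptog Ftog; rewrite (bigID (fun T : {set I} => i \in T)) /=.
rewrite [X in _ + X](reindex_inj (inv_inj toggleK)) /=.
under [X in _ + X]eq_bigl => T do rewrite Ptog in_toggle eqxx negbK.
by rewrite -big_split big1 // => T /andP[PT _] /=; rewrite addrC Ftog.
Qed.
End Toggle.

Lemma subset_mobius (R : pzRingType) (I : finType) (g : {set I} -> R) (S : {set I}) :
  \sum_(T : {set I} | T \subset S)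
    (-1) ^+ #|T| * \sum_(W : {set I} | W \subset T) (-1) ^+ #|W| * g W = g S.
Proof.
under eq_bigr do rewrite mulr_sumr.
rewrite (exchange_big_dep (fun W : {set I} => W \subset S)) /=; last first.
  by move=> T W TS WT; apply: subset_trans WT TS.
rewrite (bigD1 S) //= [X in _ + X]big1 ?addr0.
  by rewrite (big_pred1 S) ?signrMK // => T /=; rewrite eqEsubset.
move=> W /andP[WS WnS].
have [i iS iW] : exists2 i, i \in S & i \notin W.
  by apply/subsetPn; apply: contra WnS => SW; rewrite eqEsubset WS.
apply: (sum_toggle_eq0 (i := i)) => T; first by rewrite toggle_subset ?subset_toggle.
by rewrite sign_toggle mulNr addNr.
Qed.

Lemma subset_sign_setI (R : pzRingType) (I : finType) (f : {set I} -> R) (T : {set I}) :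
  \sum_(W : {set I} | W \subset T) \sum_(W' : {set I} | W' \subset T)
     (-1) ^+ #|W| * (-1) ^+ #|W'| * f (W :&: W')
  = (-1) ^+ #|T| * \sum_(W : {set I} | W \subset T) (-1) ^+ #|W| * f W.
Proof.
rewrite (bigD1 T) //= [X in _ + X]big1 ?addr0.
  rewrite mulr_sumr; apply: eq_bigr => W WT.
  by rewrite -mulrA (setIidPr WT).
move=> W /andP[WT WnT].
have [i iT iW] : exists2 i, i \in T & i \notin W.
  by apply/subsetPn; apply: contra WnT => TW; rewrite eqEsubset WT.
apply: (sum_toggle_eq0 (i := i)) => W'; first by rewrite toggle_subset.
by rewrite sign_toggle setI_toggle // mulrN mulNr addNr.
Qed.

Lemma leq_binS_cross N a b : (a <= b)%N ->
  ('C(N.+1, a) * 'C(N, b) <= 'C(N.+1, b) * 'C(N, a))%N.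
Proof.
move=> ab; rewrite -(@leq_pmul2l N.+1) //.
have down j : (N.+1 * 'C(N, j) = (N.+1 - j) * 'C(N.+1, j))%N by rewrite -mul_bin_down.
set A := 'C(N.+1, a); set B := 'C(N.+1, b).
have -> : (N.+1 * (A * 'C(N, b)) = (N.+1 - b) * (A * B))%N by rewrite mulnCA down; ring.
have -> : (N.+1 * (B * 'C(N, a)) = (N.+1 - a) * (A * B))%N by rewrite mulnCA down; ring.
by rewrite leq_mul2r leq_sub2l ?orbT.
Qed.

Lemma leq_bin_cross M N a b : (a <= b)%N -> (N <= M)%N ->
  ('C(M, a) * 'C(N, b) <= 'C(M, b) * 'C(N, a))%N.
Proof.
move=> ab /subnK <-; elim: (M - N)%N => [|d IH]; first by rewrite mulnC.
rewrite addSn; set L := (d + N)%N.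
have [bL|Lb] := leqP b L; last first.
  by rewrite [X in (_ * X <= _)%N]bin_small ?muln0 // (leq_ltn_trans (leq_addl d N)).
have CLa : (0 < 'C(L, a) * 'C(L, b))%N by rewrite muln_gt0 !bin_gt0 bL (leq_trans ab).
rewrite -(leq_pmul2r CLa); move: (leq_mul (leq_binS_cross L ab) IH).
by congr (_ <= _)%N; ring.
Qed.

Lemma card_supsets (I : finType) (T : {set I}) m : (m <= #|I|)%N ->
  #|[set S : {set I} | (#|S| == m) && (T \subset S)]| = 'C(#|I| - #|T|, #|I| - m).
Proof.
move=> mI; have cardC (A : {set I}) : #|~: A| = (#|I| - #|A|)%N by rewrite cardsCs setCK.
rewrite -(card_imset _ (@setC_inj _)) (can_imset_pre _ (@setCK _)) -cardC -cards_draws.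
apply: eq_card => S; rewrite !inE subsetC andbC cardC; congr (_ && _).
by have := max_card S => SI; apply/eqP/eqP; lia.
Qed.

Lemma sumr_const_draws (V : nmodType) (I : finType) m (c : V) :
  \sum_(S : {set I} | #|S| == m) c = c *+ 'C(#|I|, m).
Proof. by rewrite sumr_const -card_draws; congr (_ *+ _); apply: eq_card => S; rewrite inE. Qed.

Section Configurations.
Variables n q : nat.
Implicit Types (U W S : {set 'I_n}) (a b c d x y z : config n q).

Definition agree U x y : bool := [forall i in U, x i == y i].

Lemma agreeP U x y : reflect {in U, forall i, x i = y i} (agree U x y).
Proof. by apply: (iffP forall_inP) => xy i /xy /eqP. Qed.

Lemma agree_sym U x y : agree U x y = agree U y x.
Proof. by apply/agreeP/agreeP => xy i /xy. Qed.

Lemma agreeU U W x y : agree (U :|: W) x y = agree U x y && agree W x y.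
Proof.
apply/agreeP/andP => [xy|[/agreeP xy /agreeP xy'] i].
  by split; apply/agreeP => i iU; apply: xy; rewrite inE iU ?orbT.
by rewrite inE => /orP[/xy|/xy'].
Qed.

Lemma glueE U a z i : glue U a z i = if i \in U then a i else z i.
Proof. by rewrite ffunE. Qed.

Lemma eq_glue S a b z : (glue S a b == z) = agree S a z && agree (~: S) b z.
Proof.
apply/eqP/andP => [<-|[/agreeP az /agreeP bz]].
  by split; apply/agreeP => i; rewrite ?inE glueE => iS; rewrite ?iS ?(negbTE iS).
apply/ffunP => i; rewrite glueE; case: ifP => iS; first exact: az.
by apply: bz; rewrite inE iS.
Qed.

Lemma glue_setC S x y : glue (~: S) x y = glue S y x.
Proof. by apply/ffunP => i; rewrite !glueE inE; case: (i \in S). Qed.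

Lemma glue_glue U W c d x : glue W d (glue U c x) = glue (U :|: W) (glue W d c) x.
Proof.
by apply/ffunP => i; rewrite !glueE inE; case: (boolP (i \in W)); case: (boolP (i \in U)).
Qed.

Lemma glue_idl U a b z : glue U (glue U a b) z = glue U a z.
Proof. by apply/ffunP => i; rewrite !glueE; case: (boolP (i \in U)). Qed.

Lemma glue_idr U a b z : glue U a (glue U b z) = glue U a z.
Proof. by apply/ffunP => i; rewrite !glueE; case: (boolP (i \in U)). Qed.

Lemma glue_id U a : glue U a a = a.
Proof. by apply/ffunP => i; rewrite !glueE; case: (boolP (i \in U)). Qed.

Lemma agree_setC S x y : agree S x y && agree (~: S) x y = (x == y).
Proof. by rewrite -eq_glue glue_id. Qed.

Lemma glue0 a z : glue set0 a z = z.
Proof. by apply/ffunP => i; rewrite glueE inE. Qed.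

Lemma glue_agree U a b z : agree U a b -> glue U a z = glue U b z.
Proof. by move=> /agreeP ab; apply/ffunP => i; rewrite !glueE; case: ifP => // /ab. Qed.

Lemma glue_agree_out U a z d : agree (~: U) z d -> glue U a z = glue U a d.
Proof. by rewrite -!(glue_setC U) => /glue_agree ->. Qed.

Lemma agree_glue U c x y : agree U (glue U c x) (glue U c y).
Proof. by apply/agreeP => i iU; rewrite !glueE iU. Qed.

Lemma agree_glue_out U W c x y :
  agree U x y -> agree W (glue U c x) (glue U c y) = agree W x y.
Proof.
move=> /agreeP xy; apply/agreeP/agreeP => H i iW; move: (H i iW);
  by rewrite !glueE; case: ifP => // /xy.
Qed.

Lemma card_agree A z : #|[pred d : config n q | agree A d z]| = (q ^ #|~: A|)%N.
Proof.
pose F i := if i \in A then pred1 (z i) else predT.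
have -> : #|[pred d : config n q | agree A d z]| = #|family F|.
  apply: eq_card => d; rewrite !inE; apply/agreeP/familyP => dz i.
    by rewrite /F; case: ifP => iA //; rewrite inE dz.
  by move=> iA; move: (dz i); rewrite /F iA inE => /eqP.
rewrite card_family foldrE big_image /= -(prod_nat_const (mem (~: A))) [RHS]big_mkcond /=.
apply: eq_bigr => i _; rewrite /F inE; case: (i \in A); first exact: card1.
by rewrite -[q in RHS]card_ord; apply: eq_card.
Qed.

Definition swap_glue U (p : config n q * config n q) :=
  (glue U p.2 p.1, glue U p.1 p.2).

Lemma swap_glueK U : involutive (swap_glue U).
Proof. by case=> c d; rewrite /swap_glue /= !glue_idl !glue_idr !glue_id. Qed.

Lemma sum_glue2 (V : nmodType) U (G : config n q -> V) :
  \sum_c \sum_d G (glue U d c) = (\sum_e G e) *+ (q ^ n).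
Proof.
rewrite pair_big /= (reindex_inj (inv_inj (swap_glueK U))) /=.
rewrite (eq_bigr (fun p => G p.1)) => [|p _]; last by rewrite ?glue_idl ?glue_idr glue_id.
rewrite -(pair_big predT predT (fun c _ => G c)) -sumrMnl /=.
by apply: eq_bigr => c _; rewrite sumr_const card_ffun !card_ord.
Qed.

Lemma sum_fiber (V : nmodType) S x (K : config n q -> V) :
  (forall z d, agree (~: S) z d -> K z = K d) ->
  \sum_c K c = (\sum_(z | agree S z x) K z) *+ (q ^ #|S|).
Proof.
move=> K_out; rewrite (partition_big (glue S x) (fun z => agree S z x)) /=; last first.
  by move=> c _; apply/agreeP => i iS; rewrite glueE iS.
rewrite -sumrMnl; apply: eq_bigr => z xz.
under eq_bigl => c do rewrite eq_glue agree_sym xz.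
rewrite (eq_bigr (fun _ => K z)) => [|c]; last exact: K_out.
by rewrite sumr_const card_agree setCK.
Qed.

Definition swap_glue3 U (t : config n q * (config n q * config n q)) :=
  if agree U t.1 t.2.1 then (glue U t.2.2 t.1, (glue U t.2.2 t.2.1, glue U t.1 t.2.2))
  else t.

Lemma swap_glue3K U : involutive (swap_glue3 U).
Proof.
case=> x [y c]; rewrite /swap_glue3 /=.
have [xy|nxy] /= := boolP (agree U x y); last by rewrite (negbTE nxy).
by rewrite agree_glue /= !glue_idl !glue_idr !glue_id (glue_agree _ xy) glue_id.
Qed.

Lemma sum_glue_fiber (V : nmodType) S y (G : config n q -> config n q -> V) :
  \sum_x \sum_(z | agree S z x) G x z *+ agree (~: S) x y = \sum_z G (glue S z y) z.
Proof.
rewrite (exchange_big_dep predT) //=; apply: eq_bigr => z _.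
transitivity (\sum_(x | glue S z y == x) G x z).
  rewrite big_mkcond [RHS]big_mkcond; apply: eq_bigr => x _.
  rewrite eq_glue (agree_sym S z) (agree_sym _ y).
  by case: (agree S x z); case: (agree (~: S) x y); rewrite ?mulr0n ?mulr1n.
by rewrite (big_pred1 (glue S z y)) // => x; rewrite eq_sym.
Qed.

End Configurations.

Section Operators.
Variables (R : rcfType) (n q : nat).
Hypothesis q_gt0 : (0 < q)%N.
Implicit Types (U W : {set 'I_n}) (x y : config n q).

Definition qop := config n q -> config n q -> R[i].

(* [depolarize U X] is [Tr_U X] tensored with the maximally mixed state on U;
   the sum over all of [config n q] overcounts [Tr_U] by [q ^ (n - #|U|)]. *)
Definition depolarize U (X : qop) : qop := fun x y =>
  (q%:R ^+ n)^-1 * \sum_c (agree U x y)%:R * X (glue U c x) (glue U c y).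

Definition hs_dot (X Y : qop) : R[i] := \sum_x \sum_y (X x y)^* * Y x y.

Lemma dim_neq0 : (q%:R ^+ n : R[i]) != 0.
Proof. by rewrite expf_neq0 // pnatr_eq0 -lt0n. Qed.

Lemma depolarizeU U W X x y :
  depolarize U (depolarize W X) x y = depolarize (U :|: W) X x y.
Proof.
rewrite /depolarize agreeU; have [xy|nxy] /= := boolP (agree U x y); last first.
  by rewrite !big1 ?mulr0 // => c _; rewrite mul0r.
under eq_bigr => c _ do rewrite mul1r (agree_glue_out W c xy).
have [xy'|nxy'] := boolP (agree W x y); last first.
  rewrite [X in _ = _ * X]big1 => [|c _]; last exact: mul0r.
  by rewrite big1 ?mulr0 // => c _; rewrite big1 ?mulr0 // => d _; exact: mul0r.
under eq_bigr => c _ do under eq_bigr => d _ do rewrite mul1r !glue_glue.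
under [in RHS]eq_bigr => c _ do rewrite mul1r.
rewrite -mulr_sumr (sum_glue2 W (fun e => X (glue (U :|: W) e x) (glue (U :|: W) e y))).
by rewrite -[_ *+ q ^ n]mulr_natl natrX mulKf ?dim_neq0.
Qed.

Lemma hs_dot_depolarize U X Y : hs_dot (depolarize U X) Y = hs_dot X (depolarize U Y).
Proof.
have sum3 (f : config n q -> config n q -> config n q -> R[i]) :
    \sum_x \sum_y \sum_c f x y c = \sum_t f t.1 t.2.1 t.2.2.
  rewrite -(pair_big predT predT (fun x p => f x p.1 p.2)) /=.
  by apply: eq_bigr => x _; rewrite -(pair_big predT predT (f x)).
have conj_dim : ((q%:R ^+ n)^-1)^* = (q%:R ^+ n)^-1 :> R[i].
  by rewrite fmorphV rmorphXn rmorph_nat.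
pose G (Z : qop) t := (agree U t.1 t.2.1)%:R * Z (glue U t.2.2 t.1) (glue U t.2.2 t.2.1).
have hs_dotE (A B : qop) : hs_dot A (depolarize U B) =
    (q%:R ^+ n)^-1 * \sum_t (A t.1 t.2.1)^* * G B t.
  rewrite -(sum3 (fun x y c => (A x y)^* * G B (x, (y, c)))) mulr_sumr.
  apply: eq_bigr => x _; rewrite mulr_sumr; apply: eq_bigr => y _.
  by rewrite mulrCA mulr_sumr; congr (_ * _); apply: eq_bigr => c _; rewrite mulrCA.
have conj_hs_dot (A B : qop) : (hs_dot A B)^* = hs_dot B A.
  rewrite rmorph_sum; apply: eq_bigr => x _; rewrite rmorph_sum; apply: eq_bigr => y _.
  by rewrite /= rmorphM /= conjCK mulrC.
rewrite -conj_hs_dot !hs_dotE rmorphM /= conj_dim; congr (_ * _).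
rewrite rmorph_sum [RHS](reindex_inj (inv_inj (swap_glue3K U))).
apply: eq_bigr => -[x [y c]] _.
rewrite /G /swap_glue3 /=; have [xy|nxy] /= := boolP (agree U x y); last first.
  by rewrite (negbTE nxy) !(mul0r, mulr0, rmorph0).
rewrite agree_glue !glue_idl !glue_idr !glue_id (glue_agree _ xy) glue_id.
by rewrite !mul1r rmorphM /= conjCK mulrC.
Qed.

Lemma hs_dot_ge0 X : 0 <= hs_dot X X.
Proof. by apply: sumr_ge0 => x _; apply: sumr_ge0 => y _; rewrite mulrC mul_conjC_ge0. Qed.

Lemma hs_dot_depolarize2 U W X :
  hs_dot (depolarize U X) (depolarize W X) = hs_dot X (depolarize (U :|: W) X).
Proof.
rewrite hs_dot_depolarize; apply: eq_bigr => x _; apply: eq_bigr => y _.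
by rewrite depolarizeU.
Qed.

Lemma hs_dot_sum (J : finType) (P : pred J) (c : J -> R[i]) (X : J -> qop) :
  let Y : qop := fun x y => \sum_(j | P j) c j * X j x y in
  hs_dot Y Y = \sum_(j | P j) \sum_(j' | P j') (c j)^* * c j' * hs_dot (X j) (X j').
Proof.
transitivity (\sum_x \sum_y \sum_(j | P j) \sum_(j' | P j')
    (c j)^* * c j' * ((X j x y)^* * X j' x y)).
  apply: eq_bigr => x _; apply: eq_bigr => y _.
  rewrite rmorph_sum /= mulr_suml; apply: eq_bigr => j _.
  by rewrite mulr_sumr; apply: eq_bigr => j' _; rewrite rmorphM /= mulrACA.
under eq_bigr do rewrite exchange_big.
rewrite exchange_big; apply: eq_bigr => j _.
under eq_bigr do rewrite exchange_big.
rewrite exchange_big; apply: eq_bigr => j' _.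
by rewrite mulr_sumr; apply: eq_bigr => x _; rewrite mulr_sumr.
Qed.

Lemma depolarize_sign_sum_ge0 X (T : {set 'I_n}) :
  0 <= (-1) ^+ #|T| *
    \sum_(W : {set 'I_n} | W \subset T) (-1) ^+ #|W| * hs_dot X (depolarize (~: W) X).
Proof.
rewrite -subset_sign_setI.
have := hs_dot_ge0 (fun x y => \sum_(W : {set 'I_n} | W \subset T)
  (-1) ^+ #|W| * depolarize (~: W) X x y).
rewrite hs_dot_sum; congr (_ <= _); apply: eq_bigr => W _; apply: eq_bigr => W' _.
by rewrite rmorphXn rmorphN1 hs_dot_depolarize2 setCI.
Qed.
End Operators.

Section PureState.
Variables (R : rcfType) (n q : nat) (psi : qvec R n q).
Hypothesis q_gt0 : (0 < q)%N.
Implicit Types (S T W : {set 'I_n}) (x y z : config n q).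

Definition density : qop R n q := fun x y => psi x * (psi y)^*.

(* [purity S] is tr(rho_S^2), written via the exchange of the S-parts of two copies
   of psi; [scaled_purity] and [purity_mobius] are Rains' A_S and a_T. *)
Definition purity S : R[i] :=
  \sum_x \sum_y (psi x)^* * (psi y)^* * psi (glue S x y) * psi (glue S y x).

Definition scaled_purity S := q%:R ^+ #|S| * purity S.

Definition purity_mobius T :=
  (-1) ^+ #|T| * \sum_(W : {set 'I_n} | W \subset T) (-1) ^+ #|W| * scaled_purity W.

Lemma purity_setC S : purity (~: S) = purity S.
Proof.
by apply: eq_bigr => x _; apply: eq_bigr => y _; rewrite !glue_setC mulrAC.
Qed.

Lemma scaled_purity_setC S :
  q%:R ^+ #|~: S| * scaled_purity S = q%:R ^+ #|S| * scaled_purity (~: S).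
Proof. by rewrite /scaled_purity purity_setC mulrCA. Qed.

Lemma scaled_purity_mobius S :
  scaled_purity S = \sum_(T : {set 'I_n} | T \subset S) purity_mobius T.
Proof. by rewrite subset_mobius. Qed.

Lemma depolarize_density S x y :
  depolarize (~: S) density x y =
    (agree (~: S) x y)%:R * q%:R ^+ #|S| / q%:R ^+ n * reduced_entry psi S x y.
Proof.
rewrite /depolarize -mulr_sumr mulrC -!mulrA; congr (_ * _).
under eq_bigr do rewrite !glue_setC.
rewrite (sum_fiber (S := S) x) => [|z d zd]; last first.
  by rewrite /density !(glue_agree_out _ zd).
by rewrite -[_ *+ _]mulr_natl natrX mulrAC mulrA.
Qed.

Lemma purity_swapE S :
  purity S = \sum_y \sum_z (density (glue S z y) y)^* * psi z * (psi (glue S y z))^*.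
Proof.
rewrite /purity pair_big (reindex_inj (inv_inj (swap_glueK S))) pair_big /=.
apply: eq_bigr => -[y z] _ /=; rewrite !glue_idl !glue_idr !glue_id.
by rewrite /density rmorphM /= conjCK; ring.
Qed.

Lemma scaled_purity_hs_dot S :
  q%:R ^+ n * hs_dot density (depolarize (~: S) density) = scaled_purity S.
Proof.
rewrite /scaled_purity purity_swapE /hs_dot exchange_big /= mulr_sumr [RHS]mulr_sumr.
apply: eq_bigr => y _.
pose G x z := (density x y)^* * (psi (glue S x z) * (psi (glue S y z))^*).
rewrite [in RHS](eq_bigr (fun z => G (glue S z y) z)) => [|z _]; last first.
  by rewrite /G glue_idl glue_id mulrA.
rewrite -(sum_glue_fiber S y G) mulr_sumr [RHS]mulr_sumr; apply: eq_bigr => x _.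
rewrite depolarize_density /G sumrMnl -mulr_sumr /reduced_entry /agree -mulr_natr.
by field; rewrite mul1r; apply: dim_neq0.
Qed.

Lemma purity_mobius_ge0 T : 0 <= purity_mobius T.
Proof.
rewrite /purity_mobius; under eq_bigr do rewrite -scaled_purity_hs_dot mulrCA.
rewrite -mulr_sumr mulrCA mulr_ge0 ?exprn_ge0 ?ler0n //.
exact: depolarize_sign_sum_ge0.
Qed.

Lemma scaled_purity_set0 : is_pure_state psi -> scaled_purity set0 = 1.
Proof.
rewrite /scaled_purity /purity cards0 mul1r => pure.
transitivity ((\sum_x psi x * (psi x)^*) * (\sum_y psi y * (psi y)^*)); last first.
  by rewrite pure mul1r.
rewrite mulr_suml; apply: eq_bigr => x _; rewrite mulr_sumr; apply: eq_bigr => y _.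
by rewrite !glue0; ring.
Qed.

Lemma scaled_purity_maximally_mixed S :
  is_pure_state psi -> reduced_maximally_mixed psi S -> scaled_purity S = 1.
Proof.
move=> pure mixed; have dens x y : depolarize (~: S) density x y =
    if x == y then (q%:R ^+ n)^-1 else 0.
  rewrite depolarize_density mixed -(agree_setC S) -[[forall i in S, _]]/(agree S x y).
  case: (agree S x y); case: (agree (~: S) x y); rewrite /= ?(mul0r, mulr0, mul1r) //.
  by rewrite mulrAC mulfV ?mul1r // expf_neq0 // pnatr_eq0 -lt0n.
rewrite -scaled_purity_hs_dot /hs_dot.
rewrite (eq_bigr (fun x => (density x x)^* * (q%:R ^+ n)^-1)) => [|x _]; last first.
  rewrite (bigD1 x) //= big1 ?addr0 => [|y yx]; first by rewrite dens eqxx.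
  by rewrite dens eq_sym (negbTE yx) mulr0.
rewrite -mulr_suml -rmorph_sum.
have -> : \sum_x density x x = 1 := pure.
by rewrite rmorph1 mul1r mulfV ?dim_neq0.
Qed.

Lemma sum_scaled_purity_card m : (m <= n)%N ->
  \sum_(S : {set 'I_n} | #|S| == m) scaled_purity S =
  \sum_(T : {set 'I_n}) purity_mobius T * 'C(n - #|T|, n - m)%:R.
Proof.
move=> mn; under eq_bigr do rewrite scaled_purity_mobius.
rewrite (exchange_big_dep predT) //=; apply: eq_bigr => T _.
rewrite -(eq_bigl _ _ (fun S => in_set (fun S => (#|S| == m) && (T \subset S)) S)).
by rewrite sumr_const card_supsets card_ord // mulr_natr.
Qed.

End PureState.

Section ShadowBounds.
Variables (R : rcfType) (n q : nat) (psi : qvec R n q).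
Hypotheses (q_gt0 : (0 < q)%N) (pure : is_pure_state psi).
Implicit Types (S T : {set 'I_n}).

Local Notation a := (purity_mobius psi).
Local Notation A := (scaled_purity psi).
Local Notation Q := (q%:R : R[i]).

Lemma purity_mobius_set0 : a set0 = 1.
Proof.
rewrite /purity_mobius (big_pred1 set0) => [|W]; last by rewrite subset0.
by rewrite cards0 expr0 !mul1r scaled_purity_set0.
Qed.

Lemma scaled_purity_ge1 S : 1 <= A S.
Proof.
rewrite scaled_purity_mobius (bigD1 set0) ?sub0set //= purity_mobius_set0 lerDl.
by apply: sumr_ge0 => T _; apply: purity_mobius_ge0.
Qed.

Lemma scaled_purity_ge S : (n <= 2 * #|S|)%N -> Q ^+ (2 * #|S| - n) <= A S.
Proof.
move=> half_le; have cardC : #|~: S| = (n - #|S|)%N by rewrite cardsCs setCK card_ord.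
have Q_gt0 : 0 < Q by rewrite ltr0n.
rewrite -(ler_pM2l (exprn_gt0 (n - #|S|) Q_gt0)) -cardC scaled_purity_setC cardC -exprD.
have -> : (n - #|S| + (2 * #|S| - n))%N = #|S| by have := max_card S; rewrite card_ord; lia.
by rewrite ler_peMr ?exprn_ge0 ?ler0n ?scaled_purity_ge1.
Qed.

Lemma sum_scaled_purity_card_split m : (m <= n)%N ->
  \sum_(S : {set 'I_n} | #|S| == m) A S =
  'C(n, m)%:R + \sum_(T : {set 'I_n} | T != set0) a T * 'C(n - #|T|, n - m)%:R.
Proof.
move=> mn; rewrite sum_scaled_purity_card // (bigD1 set0) //=.
by rewrite purity_mobius_set0 mul1r cards0 subn0 bin_sub.
Qed.

Lemma sum_purity_mobius_ge m : (n <= 2 * m)%N -> (m <= n)%N ->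
  'C(n, m)%:R * (Q ^+ (2 * m - n) - 1) <=
  \sum_(T : {set 'I_n} | T != set0) a T * 'C(n - #|T|, n - m)%:R.
Proof.
move=> half_le mn; rewrite mulrBr mulr1 lerBlDl -sum_scaled_purity_card_split //.
rewrite mulr_natl -[X in 'C(X, m)](card_ord n) -sumr_const_draws.
by apply: ler_sum => S /eqP Sm; rewrite -Sm scaled_purity_ge // Sm.
Qed.

End ShadowBounds.

Section UniformStates.
Variables (R : rcfType) (n q k : nat) (psi : qvec R n q).
Hypotheses (q_gt0 : (0 < q)%N) (uniform : k_uniform k psi).
Implicit Types (S T : {set 'I_n}).

Local Notation a := (purity_mobius psi).
Local Notation A := (scaled_purity psi).
Local Notation Q := (q%:R : R[i]).

Let pure : is_pure_state psi. Proof. by case: uniform. Qed.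

Lemma scaled_purity_uniform S : #|S| = k -> A S = 1.
Proof.
by move=> Sk; apply: scaled_purity_maximally_mixed => //; case: uniform => _; apply.
Qed.

Lemma purity_mobius_small T : (k <= n)%N -> T != set0 -> (#|T| <= k)%N -> a T = 0.
Proof.
move=> kn T0 Tk; have := sum_scaled_purity_card_split pure kn.
rewrite (eq_bigr (fun _ => 1)) => [|S /eqP]; last exact: scaled_purity_uniform.
rewrite sumr_const_draws card_ord -[LHS]addr0 => /addrI /esym /psumr_eq0P sum0.
have /eqP := sum0 (fun T _ => mulr_ge0 (purity_mobius_ge0 psi q_gt0 T) (ler0n _ _)) T T0.
by rewrite mulf_eq0 pnatr_eq0 eqn0Ngt bin_gt0 leq_sub2l // orbF => /eqP.
Qed.

Lemma scaled_purity_cocard S :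
  (2 * k <= n)%N -> #|S| = (n - k)%N -> A S = Q ^+ (n - 2 * k).
Proof.
move=> k2n Sk; have cardC : #|~: S| = k by rewrite cardsCs setCK card_ord Sk; lia.
have Qk_neq0 : Q ^+ k != 0 by rewrite expf_neq0 // pnatr_eq0 -lt0n.
have split_nk : (n - k = k + (n - 2 * k))%N by lia.
move: (scaled_purity_setC psi S).
by rewrite (scaled_purity_uniform cardC) mulr1 cardC Sk split_nk exprD => /(mulfI Qk_neq0).
Qed.

Lemma sum_purity_mobius_cocard : (2 * k <= n)%N ->
  \sum_(T : {set 'I_n} | T != set0) a T * 'C(n - #|T|, k)%:R =
  'C(n, k)%:R * (Q ^+ (n - 2 * k) - 1).
Proof.
move=> k2n; have := sum_scaled_purity_card_split pure (leq_subr k n).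
rewrite (eq_bigr (fun _ => Q ^+ (n - 2 * k))) => [|S /eqP]; last exact: scaled_purity_cocard.
rewrite sumr_const_draws card_ord subKn ?bin_sub; try lia.
by move=> E; rewrite mulrBr mulr1 mulr_natl E addrC addKr.
Qed.

Lemma k_uniform_bound m : (k < m)%N -> (n <= 2 * m)%N -> (m <= n - k)%N ->
  'C(n - k - 1, k)%:R * ('C(n, m)%:R * (Q ^+ (2 * m - n) - 1)) <=
  'C(n - k - 1, n - m)%:R * ('C(n, k)%:R * (Q ^+ (n - 2 * k) - 1)).
Proof.
move=> km half_le mk; rewrite -sum_purity_mobius_cocard; last by lia.
have mn : (m <= n)%N by lia.
apply: le_trans (ler_wpM2l (ler0n _ _) (sum_purity_mobius_ge q_gt0 pure half_le mn)) _.
rewrite !mulr_sumr; apply: ler_sum => T T0.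
have [Tk|kT] := leqP #|T| k; first by rewrite purity_mobius_small ?mul0r ?mulr0 //; lia.
rewrite mulrCA [X in _ <= X]mulrCA ler_wpM2l ?purity_mobius_ge0 // -!natrM ler_nat.
by apply: leq_bin_cross; have := max_card T; rewrite card_ord; lia.
Qed.

End UniformStates.

Theorem theorem5 (R : rcfType) (q n k : nat) :
  (2 <= q)%N ->
  (k + 1 <= n./2)%N ->
  let u := (n./2 + 1)%N in
  let v := (n - k)%N in
  (u < v)%N ->
  ('C(n - k - 1, n - v)%:R / 'C(n - k - 1, n - u)%:R : R) >
    ((q%:R ^+ (2 * v - n) - 1) * 'C(n, v)%:R) /
    ((q%:R ^+ (2 * u - n) - 1) * 'C(n, u)%:R) ->
  ~ exists psi : qvec R n q, k_uniform k psi.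
Proof.
move=> q2 k_half u v uv ratio [psi uniform].

have [ku nu un] : [/\ (k < u)%N, (n <= 2 * u)%N & (u <= n)%N] by rewrite /u; split; lia.
have [nv v2n] : (n - v = k)%N /\ (2 * v - n = n - 2 * k)%N by rewrite /v; split; lia.
have bound : 'C(n - k - 1, n - v)%:R * ((q%:R ^+ (2 * u - n) - 1) * 'C(n, u)%:R) <=
    'C(n - k - 1, n - u)%:R * ((q%:R ^+ (2 * v - n) - 1) * 'C(n, v)%:R) :> R.
  rewrite -lecR !(rmorphM, rmorphB, rmorphXn, rmorph_nat, rmorph1) nv v2n /v bin_sub.
    have := k_uniform_bound (ltnW q2) uniform ku nu (ltnW uv).
    by rewrite ![_ * 'C(n, _)%:R]mulrC.
  by lia.
have den_gt0 : 0 < (q%:R ^+ (2 * u - n) - 1) * 'C(n, u)%:R :> R.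
  by rewrite mulr_gt0 ?ltr0n ?bin_gt0 // subr_gt0 exprn_egt1 ?ltr1n //; lia.
have num_gt0 : 0 < 'C(n - k - 1, n - u)%:R :> R by rewrite ltr0n bin_gt0; lia.
move: ratio; rewrite ltr_pdivlMr // mulrAC ltr_pdivrMr // mulrC.
by rewrite ltNge bound.
Qed.
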